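(* For every set of formulas $\Delta$ and every formula $\varphi$ of $\mathrm{PRED2}_0$: if $\Delta\vdash_{\mathrm{PRED2}_0}\varphi$ then $\lceil\Delta\rceil,\Gamma(\Delta\cup\{\varphi\})\vdash_{\mathcal I_0}\lceil\varphi\rceil$.
   Context: $\mathrm{PRED2}_0$: types $\mathcal T::=o\mid\mathcal B\mid\mathcal B\to\mathcal T$ with $\mathcal B$ a finite set of base types; for each type $\tau$, countable sets $V_\tau$ of variables and $\Sigma_\tau$ of constants; terms of type $\tau$: variables, constants, applications $t_1t_2$ ($t_1\in T_{\sigma\to\tau}$, $t_2\in T_\sigma$, $\sigma\in\mathcal B$); formulas (type $o$) additionally include $\varphi\supset\psi$ and $\forall x.\varphi$ for $x\in V_\sigma$, $\sigma\in\mathcal B\cup\{o\}$; $\alpha$-equivalent formulas identified. Derivation rules: axiom $\Delta,\varphi\vdash\varphi$; $\supset$-introduction (from $\Delta,\varphi\vdash\psi$ infer $\Delta\vdash\varphi\supset\psi$); modus ponens; $\forall$-introduction (from $\Delta\vdash\varphi$ infer $\Delta\vdash\forall x_\tau.\varphi$ if $x_\tau\notin FV(\Delta)$); $\forall$-elimination (from $\Delta\vdash\forall x_\tau.\varphi$ infer $\Delta\vdash\varphi[x/t]$, $t\in T_\tau$). For arbitrary $\Delta$, derivability means from a finite subset. $\mathcal I_0$: primitive constants $\Sigma$ contain $\Xi$, $L$, $A_\tau$ ($\tau\in\mathcal B$) and every constant of every $\Sigma_\tau$; variables of $\mathrm{PRED2}_0$ are variables of $\mathcal I_0$; terms are type-free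 lambda-terms over $\Sigma$. Abbreviations: $I=\lambda x.x$, $K=\lambda xy.x$, $H=\lambda x.L(Kx)$, $\supset\;=\lambda xy.\Xi(Kx)(Ky)$ (infix), $F=\lambda xyf.\Xi x(\lambda z.y(fz))$. Axioms: $\Gamma,t\vdash t$; $\Gamma\vdash LH$; $\Gamma\vdash LA_\tau$ ($\tau\in\mathcal B$). Rules: (Eq) from $\Gamma\vdash t_1$, $t_1=_{\beta\eta}t_2$ infer $\Gamma\vdash t_2$; ($H_i$) from $\Gamma\vdash t$ infer $\Gamma\vdash Ht$; ($\Xi_e$) from $\Gamma\vdash\Xi t_1t_2$, $\Gamma\vdash t_1t_3$ infer $\Gamma\vdash t_2t_3$; ($\Xi_i$) from $\Gamma,t_1x\vdash t_2x$, $\Gamma\vdash Lt_1$ infer $\Gamma\vdash\Xi t_1t_2$; ($\Xi_H$) from $\Gamma,t_1x\vdash H(t_2x)$, $\Gamma\vdash Lt_1$ infer $\Gamma\vdash H(\Xi t_1t_2)$; in the last two $x\notin FV(\Gamma,t_1,t_2)$. For arbitrary $\Gamma$, $\Gamma\vdash_{\mathcal I_0}t$ means derivable from a finite subset. Set $A_o=H$ and $A_{\tau_1\to\tau_2}=FA_{\tau_1}A_{\tau_2}$. Translation $\lceil\cdot\rceil$: $\lceil x\rceil=x$, $\lceil c\rceil=c$, $\lceil t_1t_2\rceil=\lceil t_1\rceil\lceil t_2\rceil$, $\lceil\varphi\supset\psi\rceil=\lceil\varphi\rceil\supset\lceil\psi\rceil$, $\lceil\forall x.\varphi\rceil=\Xi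 A_\tau(\lambda x.\lceil\varphi\rceil)$ for $x\in V_\tau$; $\lceil\Delta\rceil$ is the image of $\Delta$. For a set of formulas $\Delta$, $\Gamma(\Delta)$ consists of: $A_\tau x$ for every $x\in FV(\Delta)$ with $x\in V_\tau$; $A_\tau c$ for every $c\in\Sigma_\tau$ and every $\tau$; $LA_\tau$ for every $\tau\in\mathcal B$; and, for each $\tau\in\mathcal B$, $A_\tau y$ for some chosen variable $y\in V_\tau$ with $y\notin FV(\Delta)$. *)

(* PRED2_0 and I_0 in locally nameless representation:
   free variables are names (type, index), bound variables are de Bruijn
   indices, so alpha-equivalent formulas/terms are literally equal. *)
From Stdlib Require Import List.
Import ListNotations.
Set Implicit Arguments.

Inductive ty (B : Type) : Type :=
| To : ty B
| Tb : B -> ty B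
| Tarr : B -> ty B -> ty B.
Arguments To {B}.

(* variables: V_tau = { (tau, n) | n : nat } (countably infinite per type);
   they are shared by PRED2_0 and I_0 *)
Definition var (B : Type) : Type := (ty B * nat)%type.

Definition quantifiable (B : Type) (s : ty B) : Prop :=
  match s with To => True | Tb _ => True | Tarr _ _ => False end.

Section Syntax.
Variable B : Type.
Variable Sig : ty B -> Type.

Inductive pterm : Type :=
| PFVar : var B -> pterm
| PBVar : nat -> pterm
| PConst : forall t : ty B, Sig t -> pterm
| PApp : pterm -> pterm -> pterm
| PImp : pterm -> pterm -> pterm
| PAll : ty B -> pterm -> pterm.   (* PAll s phi binds PBVar 0, of type s *)

(* typing: G gives the types of the bound variables *)
Inductive has_type : list (ty B) -> pterm -> ty B -> Prop :=
| ht_fvar G x : has_type G (PFVar x) (fst x)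
| ht_bvar G i t : nth_error G i = Some t -> has_type G (PBVar i) t
| ht_const G t c : has_type G (@PConst t c) t
| ht_app G t1 t2 b t :
    has_type G t1 (Tarr b t) -> has_type G t2 (Tb b) -> has_type G (PApp t1 t2) t
| ht_imp G p q : has_type G p To -> has_type G q To -> has_type G (PImp p q) To
| ht_all G s p : quantifiable s -> has_type (s :: G) p To -> has_type G (PAll s p) To.

Definition is_term (t : pterm) (s : ty B) : Prop := has_type [] t s.
Definition is_formula (p : pterm) : Prop := has_type [] p To.

Fixpoint popen_rec (k : nat) (u : pterm) (t : pterm) : pterm :=
  match t with
  | PFVar x => PFVar x
  | PBVar i => if Nat.eqb i k then u else PBVar i
  | PConst c => PConst c
  | PApp t1 t2 => PApp (popen_rec k u t1) (popen_rec k u t2)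
  | PImp t1 t2 => PImp (popen_rec k u t1) (popen_rec k u t2)
  | PAll s p => PAll s (popen_rec (S k) u p)
  end.
(* popen p t = p[x/t] where PAll s p = forall x. (...) *)
Definition popen (p u : pterm) : pterm := popen_rec 0 u p.

Fixpoint pfv (t : pterm) : list (var B) :=
  match t with
  | PFVar x => [x]
  | PBVar _ => []
  | PConst _ => []
  | PApp t1 t2 => pfv t1 ++ pfv t2
  | PImp t1 t2 => pfv t1 ++ pfv t2
  | PAll _ p => pfv p
  end.

Definition pfvs (D : list pterm) : list (var B) := flat_map pfv D.

Inductive P_der : list pterm -> pterm -> Prop :=
| P_ax D p : In p D -> is_formula p -> P_der D p
| P_impI D p q : is_formula p -> P_der (p :: D) q -> P_der D (PImp p q)
| P_mp D p q : P_der D (PImp p q) -> P_der D p -> P_der D q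
| P_allI D p x :
    quantifiable (fst x) -> ~ In x (pfvs D) -> ~ In x (pfv p) ->
    P_der D (popen p (PFVar x)) -> P_der D (PAll (fst x) p)
| P_allE D s p t :
    P_der D (PAll s p) -> is_term t s -> P_der D (popen p t).

Definition P_derives (Delta : pterm -> Prop) (p : pterm) : Prop :=
  exists l : list pterm, (forall q, In q l -> Delta q) /\ P_der l p.

Definition inFV (Delta : pterm -> Prop) (x : var B) : Prop :=
  exists q, Delta q /\ In x (pfv q).

Inductive iconst : Type :=
| CXi : iconst
| CL : iconst
| CA : B -> iconst
| CS : forall t : ty B, Sig t -> iconst.

Inductive iterm : Type :=
| IFVar : var B -> iterm
| IBVar : nat -> iterm
| IConst : iconst -> iterm
| IApp : iterm -> iterm -> iterm
| ILam : iterm -> iterm.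

Fixpoint iopen_rec (k : nat) (u : iterm) (t : iterm) : iterm :=
  match t with
  | IFVar x => IFVar x
  | IBVar i => if Nat.eqb i k then u else IBVar i
  | IConst c => IConst c
  | IApp t1 t2 => IApp (iopen_rec k u t1) (iopen_rec k u t2)
  | ILam t1 => ILam (iopen_rec (S k) u t1)
  end.
Definition iopen (t u : iterm) : iterm := iopen_rec 0 u t.

Fixpoint ifv (t : iterm) : list (var B) :=
  match t with
  | IFVar x => [x]
  | IBVar _ => []
  | IConst _ => []
  | IApp t1 t2 => ifv t1 ++ ifv t2
  | ILam t1 => ifv t1
  end.
Definition ifvs (G : list iterm) : list (var B) := flat_map ifv G.

Fixpoint lc_at (k : nat) (t : iterm) : Prop :=
  match t with
  | IFVar _ => True
  | IBVar i => i < k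
  | IConst _ => True
  | IApp t1 t2 => lc_at k t1 /\ lc_at k t2
  | ILam t1 => lc_at (S k) t1
  end.
Definition lc (t : iterm) : Prop := lc_at 0 t.

Inductive beq : iterm -> iterm -> Prop :=
| beq_refl t : beq t t
| beq_sym t u : beq t u -> beq u t
| beq_trans t u v : beq t u -> beq u v -> beq t v
| beq_beta t u : lc (ILam t) -> lc u -> beq (IApp (ILam t) u) (iopen t u)
| beq_eta t : lc t -> beq (ILam (IApp t (IBVar 0))) t
| beq_app t1 t2 u1 u2 : beq t1 t2 -> beq u1 u2 -> beq (IApp t1 u1) (IApp t2 u2)
| beq_lam t u x : ~ In x (ifv t) -> ~ In x (ifv u) ->
    beq (iopen t (IFVar x)) (iopen u (IFVar x)) -> beq (ILam t) (ILam u).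

Definition IXi : iterm := IConst CXi.
Definition IL : iterm := IConst CL.
Definition IAb (b : B) : iterm := IConst (CA b).
Definition II : iterm := ILam (IBVar 0).
Definition IK : iterm := ILam (ILam (IBVar 1)).
Definition IH : iterm := ILam (IApp IL (IApp IK (IBVar 0))).
(* (imp) = \xy. Xi (K x) (K y) *)
Definition IImpC : iterm :=
  ILam (ILam (IApp (IApp IXi (IApp IK (IBVar 1))) (IApp IK (IBVar 0)))).
Definition IImp (a b : iterm) : iterm := IApp (IApp IImpC a) b.
(* F = \xyf. Xi x (\z. y (f z)) *)
Definition IF : iterm :=
  ILam (ILam (ILam (IApp (IApp IXi (IBVar 2))
                         (ILam (IApp (IBVar 2) (IApp (IBVar 1) (IBVar 0))))))).

Inductive I_der : list iterm -> iterm -> Prop :=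
| I_ax G t : In t G -> I_der G t
| I_LH G : I_der G (IApp IL IH)
| I_LA G b : I_der G (IApp IL (IAb b))
| I_Eq G t1 t2 : I_der G t1 -> beq t1 t2 -> I_der G t2
| I_Hi G t : I_der G t -> I_der G (IApp IH t)
| I_Xe G t1 t2 t3 :
    I_der G (IApp (IApp IXi t1) t2) -> I_der G (IApp t1 t3) -> lc t3 ->
    I_der G (IApp t2 t3)
| I_Xi G t1 t2 x :
    I_der (IApp t1 (IFVar x) :: G) (IApp t2 (IFVar x)) -> I_der G (IApp IL t1) ->
    ~ In x (ifvs G) -> ~ In x (ifv t1) -> ~ In x (ifv t2) ->
    I_der G (IApp (IApp IXi t1) t2)
| I_XH G t1 t2 x :
    I_der (IApp t1 (IFVar x) :: G) (IApp IH (IApp t2 (IFVar x))) ->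
    I_der G (IApp IL t1) ->
    ~ In x (ifvs G) -> ~ In x (ifv t1) -> ~ In x (ifv t2) ->
    I_der G (IApp IH (IApp (IApp IXi t1) t2)).

Definition I_derives (Gam : iterm -> Prop) (t : iterm) : Prop :=
  exists l : list iterm, (forall u, In u l -> Gam u) /\ I_der l t.

Fixpoint Aty (t : ty B) : iterm :=
  match t with
  | To => IH
  | Tb b => IAb b
  | Tarr b t' => IApp (IApp IF (IAb b)) (Aty t')
  end.

Fixpoint tr (t : pterm) : iterm :=
  match t with
  | PFVar x => IFVar x
  | PBVar i => IBVar i
  | PConst c => IConst (CS c)
  | PApp t1 t2 => IApp (tr t1) (tr t2)
  | PImp p q => IImp (tr p) (tr q)
  | PAll s p => IApp (IApp IXi (Aty s)) (ILam (tr p))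
  end.

Definition trSet (Delta : pterm -> Prop) : iterm -> Prop :=
  fun t => exists q, Delta q /\ t = tr q.

Definition GammaSet (Delta : pterm -> Prop) (y : B -> var B) : iterm -> Prop :=
  fun t =>
    (exists x, inFV Delta x /\ t = IApp (Aty (fst x)) (IFVar x))
    \/ (exists (s : ty B) (c : Sig s), t = IApp (Aty s) (IConst (CS c)))
    \/ (exists b, t = IApp IL (IAb b))
    \/ (exists b, t = IApp (IAb b) (IFVar (y b))).

Definition good_choice (Delta : pterm -> Prop) (y : B -> var B) : Prop :=
  forall b, fst (y b) = Tb b /\ ~ inFV Delta (y b).

End Syntax.

(* The proof is by induction on the PRED2_0 derivation, for a strengthened
   invariant ([valid_from]): the translation of the conclusion, with its free
   variables instantiated by any "closing" substitution s, is derivable from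
   any I_0-context G that represents the hypotheses (under s), declares the
   constants the derivation uses, and in which each s x satisfies the type
   predicate A_τ of its type ([inhabits]).  Quantifying over s lets the
   ∀-introduction step rename its eigenvariable to a variable fresh for G,
   and lets us finally replace the variables that are not free in Δ, φ, but
   occur in ∀-eliminations, by canonical closed inhabitants of their types. *)

From Stdlib Require Import List Lia PeanoNat Wf_nat ClassicalEpsilon.
Import ListNotations.

#[local] Arguments PFVar {B Sig} _.
#[local] Arguments PBVar {B Sig} _.
#[local] Arguments PConst {B Sig} _ _.
#[local] Arguments PApp {B Sig} _ _.
#[local] Arguments PImp {B Sig} _ _.
#[local] Arguments PAll {B Sig} _ _.
#[local] Arguments IFVar {B Sig} _.
#[local] Arguments IBVar {B Sig} _.
#[local] Arguments IApp {B Sig} _ _.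
#[local] Arguments ILam {B Sig} _.
#[local] Arguments CS {B Sig} _ _.
#[local] Arguments IXi {B Sig}.
#[local] Arguments IL {B Sig}.
#[local] Arguments IAb {B Sig} _.
#[local] Arguments IK {B Sig}.
#[local] Arguments IH {B Sig}.
#[local] Arguments IImpC {B Sig}.
#[local] Arguments IF {B Sig}.
#[local] Arguments Aty {B Sig} _.

Section Soundness.
Variable B : Type.
Variable Sig : ty B -> Type.
Notation pterm := (pterm Sig).
Notation iterm := (iterm Sig).

(* Discharges goals [~ In x l] when [l] is a sublist (up to [++]) of a list
   the variable [x] was chosen fresh for. *)
Ltac fresh_from Hx :=
  let H := fresh in intro H; apply Hx; rewrite ?in_app_iff; simpl in *; tauto.

Lemma lc_at_mono (t : iterm) k k' : lc_at k t -> k <= k' -> lc_at k' t.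
Proof.
  revert k k'; induction t; simpl; intros k k' Ht Hk; intuition eauto; try lia.
  apply (IHt (S k)); auto; lia.
Qed.

Lemma lc_at_of_lc (t : iterm) k : lc t -> lc_at k t.
Proof. intros; eapply lc_at_mono; eauto; lia. Qed.

Lemma iopen_lc_at (t : iterm) k j u : lc_at k t -> k <= j -> iopen_rec j u t = t.
Proof.
  revert k j; induction t; simpl; intros k j Ht Hk; auto.
  - destruct (Nat.eqb_spec n j); auto; lia.
  - destruct Ht; f_equal; eauto.
  - f_equal; apply (IHt (S k)); auto; lia.
Qed.

Lemma iopen_lc (t : iterm) j u : lc t -> iopen_rec j u t = t.
Proof. intros; eapply iopen_lc_at; eauto; lia. Qed.

Fixpoint isub (s : var B -> iterm) (t : iterm) : iterm :=
  match t with
  | IFVar x => s x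
  | IBVar i => IBVar i
  | IConst c => IConst c
  | IApp a b => IApp (isub s a) (isub s b)
  | ILam a => ILam (isub s a)
  end.

Definition closing (s : var B -> iterm) : Prop := forall x, lc (s x).

Lemma isub_ext s s' (t : iterm) :
  (forall x, In x (ifv t) -> s x = s' x) -> isub s t = isub s' t.
Proof.
  induction t; simpl; intros Hs; auto; f_equal;
    auto using in_or_app.
Qed.

Lemma isub_id s (t : iterm) : (forall x, In x (ifv t) -> s x = IFVar x) -> isub s t = t.
Proof.
  induction t; simpl; intros Hs; auto; f_equal; auto using in_or_app.
Qed.

Lemma isub_lc s (t : iterm) k : closing s -> lc_at k t -> lc_at k (isub s t).
Proof.
  revert k; induction t; simpl; intros k Hs Ht; auto.
  - apply lc_at_of_lc; auto.
  - intuition.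
Qed.

Lemma isub_open s (t : iterm) k u : closing s ->
  isub s (iopen_rec k u t) = iopen_rec k (isub s u) (isub s t).
Proof.
  revert k; induction t; simpl; intros k Hs; auto.
  - rewrite iopen_lc; auto.
  - destruct (Nat.eqb n k); auto.
  - f_equal; auto.
  - f_equal; auto.
Qed.

Definition upd (s : var B -> iterm) (x : var B) (u : iterm) : var B -> iterm :=
  fun z => if excluded_middle_informative (z = x) then u else s z.

Lemma upd_eq s x u : upd s x u x = u.
Proof. unfold upd; destruct (excluded_middle_informative (x = x)); congruence. Qed.

Lemma upd_neq s x u z : z <> x -> upd s x u z = s z.
Proof. unfold upd; destruct (excluded_middle_informative (z = x)); congruence. Qed.

Lemma upd_closing s x x' : closing s -> closing (upd s x (IFVar x')).
Proof.
  intros Hs z; destruct (excluded_middle_informative (z = x)) as [->|Hz].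
  - rewrite upd_eq; exact I.
  - rewrite upd_neq; auto.
Qed.

Lemma isub_upd s x u (t : iterm) : ~ In x (ifv t) -> isub (upd s x u) t = isub s t.
Proof.
  intros Hx; apply isub_ext; intros z Hz; apply upd_neq; congruence.
Qed.

Lemma lc_Aty s k : lc_at k (@Aty B Sig s).
Proof. revert k; induction s; simpl; intros; repeat split; auto; lia. Qed.

Lemma ifv_Aty s : ifv (@Aty B Sig s) = [].
Proof. induction s; simpl; auto. Qed.

Lemma isub_Aty s t : isub s (Aty t) = Aty t.
Proof.
  assert (Hclosed : forall u : iterm, ifv u = [] -> isub s u = u).
  { induction u; simpl; intros Hu; auto; try discriminate.
    - apply app_eq_nil in Hu as [? ?]; f_equal; auto.
    - f_equal; auto. }
  apply Hclosed, ifv_Aty.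
Qed.

Lemma ifv_tr (p : pterm) : ifv (tr p) = pfv p.
Proof. induction p; simpl; auto; try (rewrite IHp1, IHp2; auto). rewrite ifv_Aty; auto. Qed.

Lemma tr_open (p : pterm) k u : tr (popen_rec k u p) = iopen_rec k (tr u) (tr p).
Proof.
  revert k; induction p; simpl; intros k; auto.
  - destruct (Nat.eqb n k); auto.
  - f_equal; auto.
  - unfold IImp; simpl; rewrite IHp1, IHp2; reflexivity.
  - rewrite IHp, (iopen_lc (Aty t)); auto. apply lc_Aty.
Qed.

Lemma isub_upd_open s x x' (p : pterm) : closing s -> ~ In x (pfv p) ->
  isub (upd s x (IFVar x')) (tr (popen p (PFVar x))) = iopen (isub s (tr p)) (IFVar x').
Proof.
  intros Hs Hx. unfold popen, iopen. rewrite tr_open, isub_open by (apply upd_closing; auto).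
  rewrite (isub_upd s x (IFVar x') (tr p)) by (rewrite ifv_tr; auto).
  simpl; rewrite upd_eq; reflexivity.
Qed.

Lemma tr_lc G (t : pterm) s : has_type G t s -> lc_at (length G) (tr t).
Proof.
  induction 1; simpl; auto.
  - apply nth_error_Some; congruence.
  - unfold IImp; simpl; repeat split; auto; lia.
  - repeat split; auto. apply lc_Aty.
Qed.

Lemma has_type_weaken G (u : pterm) s : has_type G u s -> forall G', has_type (G ++ G') u s.
Proof.
  induction 1; intros; try (econstructor; eauto).
  rewrite nth_error_app1; auto. apply nth_error_Some; congruence.
Qed.

Lemma has_type_open (p : pterm) G s t u : has_type (G ++ [s]) p t -> is_term u s ->
  has_type G (popen_rec (length G) u p) t.
Proof.
  revert G t; induction p; simpl; intros G t0 Hp Hu;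
    inversion Hp as [|? ? ? Hi| | | |]; subst.
  - constructor.
  - destruct (Nat.eqb_spec n (length G)) as [->|Hn].
    + rewrite nth_error_app2, Nat.sub_diag in Hi by lia. injection Hi as <-.
      exact (has_type_weaken _ _ _ Hu G).
    + constructor. assert (Hlt : n < length (G ++ [s])) by (apply nth_error_Some; congruence).
      rewrite length_app in Hlt; simpl in Hlt. rewrite nth_error_app1 in Hi by lia; auto.
  - constructor.
  - econstructor; eauto.
  - constructor; eauto.
  - constructor; auto; apply (IHp (t :: G)); auto.
Qed.

Lemma has_type_close (p : pterm) G x t :
  has_type G (popen_rec (length G) (PFVar x) p) t -> has_type (G ++ [fst x]) p t.
Proof.
  revert G t; induction p; simpl; intros G t0 Hp.
  - inversion Hp; subst; constructor.
  - destruct (Nat.eqb_spec n (length G)) as [->|Hn]; inversion Hp; subst; constructor.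
    + rewrite nth_error_app2, Nat.sub_diag by lia; reflexivity.
    + rewrite nth_error_app1; auto. apply nth_error_Some; congruence.
  - inversion Hp; subst; constructor.
  - inversion Hp; subst; econstructor; eauto.
  - inversion Hp; subst; constructor; eauto.
  - inversion Hp; subst; constructor; auto. apply (IHp (t :: G)); auto.
Qed.

Lemma derived_is_formula D (p : pterm) : P_der D p -> is_formula p.
Proof.
  unfold is_formula; induction 1 as [| |D p q _ Hpq| |D s p t _ Hall Ht]; auto.
  - constructor; auto.
  - inversion Hpq; auto.
  - constructor; auto. apply (has_type_close p [] x); auto.
  - inversion Hall; subst. apply (has_type_open p [] s); auto.
Qed.

(** Beta-eta computations with the combinators of I_0 *)

Lemma beta_K (A u : iterm) : lc A -> lc u -> beq (IApp (IApp IK A) u) A.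
Proof.
  intros HA Hu.
  eapply beq_trans; [apply beq_app; [apply beq_beta|apply beq_refl]|];
    unfold lc; simpl; auto; try lia.
  unfold iopen; simpl.
  eapply beq_trans; [apply beq_beta; unfold lc; simpl; auto; apply lc_at_of_lc; auto|].
  unfold iopen; rewrite iopen_lc; auto. apply beq_refl.
Qed.

(* H A = L (K A): A is a proposition when K A is a legitimate domain. *)
Lemma beta_H (A : iterm) : lc A -> beq (IApp IH A) (IApp IL (IApp IK A)).
Proof. intros HA; apply beq_beta; unfold lc; simpl; auto; lia. Qed.

Lemma beta_Imp (A C : iterm) : lc A -> lc C ->
  beq (IImp A C) (IApp (IApp IXi (IApp IK A)) (IApp IK C)).
Proof.
  intros HA HC. unfold IImp.
  eapply beq_trans; [apply beq_app; [apply beq_beta|apply beq_refl]|];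
    unfold lc; simpl; auto; try lia.
  unfold iopen; simpl.
  eapply beq_trans; [apply beq_beta; unfold lc; simpl; repeat split; auto; try lia;
    apply lc_at_of_lc; auto|].
  unfold iopen; simpl; rewrite iopen_lc; auto. apply beq_refl.
Qed.

Lemma beta_F (a b f : iterm) : lc a -> lc b -> lc f ->
  beq (IApp (IApp (IApp IF a) b) f) (IApp (IApp IXi a) (ILam (IApp b (IApp f (IBVar 0))))).
Proof.
  intros Ha Hb Hf.
  eapply beq_trans; [apply beq_app; [apply beq_app; [apply beq_beta|]|]|];
    try apply beq_refl; unfold lc; simpl; auto; try lia.
  unfold iopen; simpl.
  eapply beq_trans; [apply beq_app; [apply beq_beta|apply beq_refl]|];
    unfold lc; simpl; repeat split; auto; try lia; try (apply lc_at_of_lc; auto).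
  unfold iopen; simpl; rewrite (iopen_lc a); auto.
  eapply beq_trans; [apply beq_beta|]; unfold lc; simpl; repeat split; auto; try lia;
    try (apply lc_at_of_lc; auto).
  unfold iopen; simpl; rewrite (iopen_lc a), (iopen_lc b); auto. apply beq_refl.
Qed.

(** Derived rules of I_0 *)

Lemma all_intro G (A P : iterm) x : lc_at 1 P ->
  ~ In x (ifvs G) -> ~ In x (ifv A) -> ~ In x (ifv P) ->
  I_der (IApp A (IFVar x) :: G) (iopen P (IFVar x)) -> I_der G (IApp IL A) ->
  I_der G (IApp (IApp IXi A) (ILam P)).
Proof.
  intros HP HxG HxA HxP HPx HLA.
  apply (I_Xi (x := x)); auto.
  eapply I_Eq; [exact HPx|]. apply beq_sym, beq_beta; [exact HP|exact I].
Qed.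

Lemma all_intro_H G (A P : iterm) x : lc_at 1 P ->
  ~ In x (ifvs G) -> ~ In x (ifv A) -> ~ In x (ifv P) ->
  I_der (IApp A (IFVar x) :: G) (IApp IH (iopen P (IFVar x))) -> I_der G (IApp IL A) ->
  I_der G (IApp IH (IApp (IApp IXi A) (ILam P))).
Proof.
  intros HP HxG HxA HxP HPx HLA.
  apply (I_XH (x := x)); auto.
  eapply I_Eq; [exact HPx|].
  apply beq_app; [apply beq_refl|]. apply beq_sym, beq_beta; [exact HP|exact I].
Qed.

Lemma all_elim G (A P t : iterm) : lc_at 1 P -> lc t ->
  I_der G (IApp (IApp IXi A) (ILam P)) -> I_der G (IApp A t) -> I_der G (iopen P t).
Proof.
  intros HP Ht HAP HAt.
  eapply I_Eq; [exact (I_Xe HAP HAt Ht)|]. apply beq_beta; auto.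
Qed.

(* Implication introduction: the hypothesis P is represented in the context
   by K P x, which beta-reduces to P. *)
Lemma imp_intro G (P Q : iterm) x : lc P -> lc Q ->
  ~ In x (ifvs G) -> ~ In x (ifv P) -> ~ In x (ifv Q) ->
  I_der (IApp (IApp IK P) (IFVar x) :: G) Q -> I_der G (IApp IH P) -> I_der G (IImp P Q).
Proof.
  intros HP HQ HxG HxP HxQ HPQ HHP.
  eapply I_Eq; [|apply beq_sym, beta_Imp; auto].
  apply (I_Xi (x := x)); auto.
  - eapply I_Eq; [exact HPQ|]. apply beq_sym, beta_K; auto. exact I.
  - eapply I_Eq; [exact HHP|]. apply beta_H; auto.
Qed.

Lemma imp_intro_H G (P Q : iterm) x : lc P -> lc Q ->
  ~ In x (ifvs G) -> ~ In x (ifv P) -> ~ In x (ifv Q) ->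
  I_der (IApp (IApp IK P) (IFVar x) :: G) (IApp IH Q) -> I_der G (IApp IH P) ->
  I_der G (IApp IH (IImp P Q)).
Proof.
  intros HP HQ HxG HxP HxQ HPQ HHP.
  eapply I_Eq; [|apply beq_app; [apply beq_refl|apply beq_sym, beta_Imp; auto]].
  apply (I_XH (x := x)); auto.
  - eapply I_Eq; [exact HPQ|].
    apply beq_app; [apply beq_refl|]. apply beq_sym, beta_K; auto. exact I.
  - eapply I_Eq; [exact HHP|]. apply beta_H; auto.
Qed.

(* Modus ponens, by Xi-elimination at an arbitrary closed argument. *)
Lemma imp_elim G (P Q : iterm) : lc P -> lc Q ->
  I_der G (IImp P Q) -> I_der G P -> I_der G Q.
Proof.
  intros HP HQ HPQ HPd.
  eapply I_Eq in HPQ; [|apply beta_Imp; auto].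
  assert (HKP : I_der G (IApp (IApp IK P) IXi)).
  { eapply I_Eq; [exact HPd|]. apply beq_sym, beta_K; auto. exact I. }
  eapply I_Eq; [exact (I_Xe HPQ HKP I)|]. apply beta_K; auto. exact I.
Qed.

(* F a b f means that f maps a to b. *)
Lemma fun_intro G (a b f : iterm) x : lc a -> lc b -> lc f ->
  ~ In x (ifvs G) -> ~ In x (ifv a) -> ~ In x (ifv b) -> ~ In x (ifv f) ->
  I_der (IApp a (IFVar x) :: G) (IApp b (IApp f (IFVar x))) -> I_der G (IApp IL a) ->
  I_der G (IApp (IApp (IApp IF a) b) f).
Proof.
  intros Ha Hb Hf HxG Hxa Hxb Hxf Hbf HLa.
  eapply I_Eq; [|apply beq_sym, beta_F; auto].
  apply all_intro with (x := x); auto.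
  - simpl; repeat split; try apply lc_at_of_lc; auto.
  - simpl; rewrite app_nil_r, in_app_iff; tauto.
  - unfold iopen; simpl; rewrite !iopen_lc; auto.
Qed.

Lemma fun_elim G (a b f t : iterm) : lc a -> lc b -> lc f -> lc t ->
  I_der G (IApp (IApp (IApp IF a) b) f) -> I_der G (IApp a t) -> I_der G (IApp b (IApp f t)).
Proof.
  intros Ha Hb Hf Ht Habf Hat.
  eapply I_Eq in Habf; [|apply beta_F; auto].
  assert (HP : lc_at 1 (IApp b (IApp f (IBVar 0)))).
  { simpl; repeat split; try apply lc_at_of_lc; auto. }
  pose proof (all_elim G a _ t HP Ht Habf Hat) as Hbft.
  unfold iopen in Hbft; simpl in Hbft; rewrite !iopen_lc in Hbft; auto.
Qed.

Lemma L_Aty G s : quantifiable s -> I_der G (IApp IL (@Aty B Sig s)).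
Proof. destruct s; simpl; intros Hs; try contradiction; [apply I_LH|apply I_LA]. Qed.

Lemma isub_tr_imp s (p q : pterm) :
  isub s (tr (PImp p q)) = IImp (isub s (tr p)) (isub s (tr q)).
Proof. reflexivity. Qed.

Lemma isub_tr_all s s0 (p : pterm) :
  isub s (tr (PAll s0 p)) = IApp (IApp IXi (Aty s0)) (ILam (isub s (tr p))).
Proof. simpl; rewrite isub_Aty; reflexivity. Qed.

(* Quantifying over all extensions provides the
   weakening that the I_0 rules with eigenvariable conditions do not give. *)
Definition inhabits (G : list iterm) (s : var B -> iterm) : Prop :=
  forall x G', incl G G' -> I_der G' (IApp (Aty (fst x)) (s x)).

Lemma inhabits_cons G s u : inhabits G s -> inhabits (u :: G) s.
Proof. intros HG x G' Hincl; apply HG; intros v Hv; apply Hincl; right; auto. Qed.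

Lemma inhabits_upd G s x x' :
  inhabits G s -> inhabits (IApp (Aty (fst x)) (IFVar x') :: G) (upd s x (IFVar x')).
Proof.
  intros HG z G' Hincl; destruct (excluded_middle_informative (z = x)) as [->|Hz].
  - rewrite upd_eq; apply I_ax, Hincl; left; reflexivity.
  - rewrite upd_neq by auto; apply HG; intros v Hv; apply Hincl; right; auto.
Qed.

Definition const_decl (u : iterm) : Prop :=
  exists t (c : Sig t), u = IApp (Aty t) (IConst (CS t c)).

Fixpoint const_decls (p : pterm) : list iterm :=
  match p with
  | PConst t c => [IApp (Aty t) (IConst (CS t c))]
  | PApp a b | PImp a b => const_decls a ++ const_decls b
  | PAll _ a => const_decls a
  | _ => []
  end.

Lemma const_decls_decl (p : pterm) u : In u (const_decls p) -> const_decl u.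
Proof.
  induction p; simpl; intros Hu; try contradiction; try (apply in_app_or in Hu; tauto); auto.
  destruct Hu as [<-|[]]; exists t, s; reflexivity.
Qed.

Lemma const_decls_open (p : pterm) k x :
  const_decls (popen_rec k (PFVar x) p) = const_decls p.
Proof.
  revert k; induction p; simpl; intros k; auto; try (rewrite IHp1, IHp2; auto).
  destruct (Nat.eqb n k); auto.
Qed.

Fixpoint psize (p : pterm) : nat :=
  match p with
  | PApp a b | PImp a b => S (psize a + psize b)
  | PAll _ a => S (psize a)
  | _ => 0
  end.

Lemma psize_open (p : pterm) k x : psize (popen_rec k (PFVar x) p) = psize p.
Proof.
  revert k; induction p; simpl; intros k; auto; try (rewrite IHp1, IHp2; auto).
  destruct (Nat.eqb n k); auto.
Qed.

(* Each type has infinitely many variables, so one avoids any finite list. *)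
Lemma fresh_var (l : list (var B)) (s : ty B) : exists x, fst x = s /\ ~ In x l.
Proof.
  exists (s, S (list_max (map snd l))); split; auto.
  intros Hin.
  assert (Hmax : Forall (fun k => k <= list_max (map snd l)) (map snd l))
    by (apply list_max_le; lia).
  rewrite Forall_forall in Hmax; specialize (Hmax _ (in_map snd _ _ Hin)).
  simpl in Hmax; lia.
Qed.

Lemma tr_typed (t : pterm) : forall tau s G, is_term t tau -> closing s -> inhabits G s ->
  incl (const_decls t) G -> I_der G (IApp (Aty tau) (isub s (tr t))).
Proof.
  induction t as [t IH] using (induction_ltof1 _ psize); unfold ltof in IH.
  intros tau s G Ht Hs HG Hc; unfold is_term in Ht.
  destruct t as [v|i|t0 c|t1 t2|p q|s0 p]; simpl in Hc.
  - inversion Ht; subst; apply HG, incl_refl.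
  - inversion Ht as [|? ? ? Hi| | | |]; destruct i; discriminate.
  - replace tau with t0 by (inversion Ht; auto).
    apply I_ax, Hc; left; reflexivity.
  - inversion Ht as [| | |? ? ? b ? Ht1 Ht2| |]; subst.
    apply incl_app_inv in Hc as [Hc1 Hc2].
    pose proof (isub_lc s _ 0 Hs (tr_lc _ _ _ Ht1)) as L1.
    pose proof (isub_lc s _ 0 Hs (tr_lc _ _ _ Ht2)) as L2.
    apply (fun_elim G (IAb b) (Aty tau)); [exact I|apply lc_Aty|exact L1|exact L2| |].
    + apply (IH t1 ltac:(simpl; lia) (Tarr b tau)); auto.
    + apply (IH t2 ltac:(simpl; lia) (Tb b)); auto.
  - inversion Ht as [| | | |? ? ? Hp Hq|]; subst.
    apply incl_app_inv in Hc as [Hc1 Hc2].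
    rewrite isub_tr_imp.
    set (P := isub s (tr p)); set (Q := isub s (tr q)).
    assert (LP : lc P) by exact (isub_lc s _ 0 Hs (tr_lc _ _ _ Hp)).
    assert (LQ : lc Q) by exact (isub_lc s _ 0 Hs (tr_lc _ _ _ Hq)).
    destruct (fresh_var (ifvs G ++ ifv P ++ ifv Q) To) as [x [_ Hx]].
    apply (imp_intro_H G P Q x); auto; try fresh_from Hx.
    + apply (IH q ltac:(simpl; lia) To); auto using inhabits_cons.
      intros u Hu; right; auto.
    + apply (IH p ltac:(simpl; lia) To); auto.
  - inversion Ht as [| | | | |? ? ? Hs0 Hp]; subst.
    rewrite isub_tr_all.
    set (P := isub s (tr p)).
    assert (LP : lc_at 1 P) by exact (isub_lc s _ 1 Hs (tr_lc _ _ _ Hp)).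
    destruct (fresh_var (ifvs G ++ ifv P ++ pfv p) s0) as [x [Hfst Hx]].
    apply (all_intro_H G (Aty s0) P x); auto using L_Aty; try fresh_from Hx.
    + rewrite ifv_Aty; auto.
    + assert (Hpx : is_term (popen p (PFVar x)) To)
        by (apply (has_type_open p [] s0); auto; rewrite <- Hfst; constructor).
      unfold P; rewrite <- (isub_upd_open s x x p) by (auto; fresh_from Hx).
      rewrite <- Hfst.
      apply (IH (popen p (PFVar x))) with (tau := To); auto using upd_closing, inhabits_upd.
      * unfold popen; rewrite psize_open; simpl; lia.
      * unfold popen; rewrite const_decls_open; intros u Hu; right; auto.
Qed.

Definition represents (G : list iterm) (s : var B -> iterm) (D : list pterm) : Prop :=
  forall q, In q D -> exists v, In v G /\ beq v (isub s (tr q)).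

Definition valid_from (Cs : list iterm) (D : list pterm) (p : pterm) : Prop :=
  forall s G, closing s -> inhabits G s -> represents G s D -> incl Cs G ->
    I_der G (isub s (tr p)).

Lemma valid_axiom D p : In p D -> valid_from [] D p.
Proof.
  intros Hp s G _ _ HD _.
  destruct (HD p Hp) as [v [Hv Hconv]]. exact (I_Eq (I_ax _ _ Hv) Hconv).
Qed.

Lemma valid_imp_intro Cs D p q : is_formula p -> is_formula q ->
  valid_from Cs (p :: D) q -> valid_from (Cs ++ const_decls p) D (PImp p q).
Proof.
  intros Hp Hq Hvalid s G Hs HG HD Hc. apply incl_app_inv in Hc as [Hc1 Hc2].
  rewrite isub_tr_imp.
  set (P := isub s (tr p)); set (Q := isub s (tr q)).
  assert (LP : lc P) by exact (isub_lc s _ 0 Hs (tr_lc _ _ _ Hp)).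
  assert (LQ : lc Q) by exact (isub_lc s _ 0 Hs (tr_lc _ _ _ Hq)).
  destruct (fresh_var (ifvs G ++ ifv P ++ ifv Q) To) as [x [_ Hx]].
  apply (imp_intro G P Q x); auto; try fresh_from Hx.
  - apply Hvalid; auto using inhabits_cons.
    + intros q0 [<-|Hq0].
      * exists (IApp (IApp IK P) (IFVar x)); split; [left; reflexivity|].
        apply beta_K; auto. exact I.
      * destruct (HD q0 Hq0) as [v [Hv Hconv]]; exists v; split; auto; right; auto.
    + intros u Hu; right; auto.
  - exact (tr_typed p To s G Hp Hs HG Hc2).
Qed.

Lemma valid_imp_elim Cs1 Cs2 D p q : is_formula (PImp p q) ->
  valid_from Cs1 D (PImp p q) -> valid_from Cs2 D p -> valid_from (Cs1 ++ Cs2) D q.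
Proof.
  intros Hpq Hvpq Hvp s G Hs HG HD Hc. apply incl_app_inv in Hc as [Hc1 Hc2].
  inversion Hpq as [| | | |? ? ? Hp Hq|]; subst.
  apply (imp_elim G (isub s (tr p))).
  - exact (isub_lc s _ 0 Hs (tr_lc _ _ _ Hp)).
  - exact (isub_lc s _ 0 Hs (tr_lc _ _ _ Hq)).
  - exact (Hvpq s G Hs HG HD Hc1).
  - exact (Hvp s G Hs HG HD Hc2).
Qed.

(* The eigenvariable x is renamed to a variable x' fresh for the context. *)
Lemma valid_all_intro Cs D p x : quantifiable (fst x) -> has_type [fst x] p To ->
  ~ In x (pfvs D) -> ~ In x (pfv p) ->
  valid_from Cs D (popen p (PFVar x)) -> valid_from Cs D (PAll (fst x) p).
Proof.
  intros Hq Hp HxD Hxp Hvalid s G Hs HG HD Hc.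
  rewrite isub_tr_all.
  set (P := isub s (tr p)).
  assert (LP : lc_at 1 P) by exact (isub_lc s _ 1 Hs (tr_lc _ _ _ Hp)).
  destruct (fresh_var (ifvs G ++ ifv P) (fst x)) as [x' [_ Hx']].
  apply (all_intro G (Aty (fst x)) P x'); auto using L_Aty; try fresh_from Hx'.
  - rewrite ifv_Aty; auto.
  - unfold P; rewrite <- (isub_upd_open s x x' p) by auto.
    apply Hvalid; auto using upd_closing, inhabits_upd.
    + intros q Hin. destruct (HD q Hin) as [v [Hv Hconv]].
      exists v; split; [right; auto|].
      rewrite isub_upd; auto. rewrite ifv_tr; intro Hxq; apply HxD.
      apply in_flat_map; eauto.
    + intros u Hu; right; auto.
Qed.

Lemma valid_all_elim Cs D s0 p t : has_type [s0] p To -> is_term t s0 ->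
  valid_from Cs D (PAll s0 p) -> valid_from (Cs ++ const_decls t) D (popen p t).
Proof.
  intros Hp Ht Hvalid s G Hs HG HD Hc. apply incl_app_inv in Hc as [Hc1 Hc2].
  unfold popen; rewrite tr_open, isub_open by auto.
  apply (all_elim G (Aty s0)).
  - exact (isub_lc s _ 1 Hs (tr_lc _ _ _ Hp)).
  - exact (isub_lc s _ 0 Hs (tr_lc _ _ _ Ht)).
  - rewrite <- isub_tr_all; exact (Hvalid s G Hs HG HD Hc1).
  - exact (tr_typed t s0 s G Ht Hs HG Hc2).
Qed.

Lemma soundness D p : P_der D p ->
  exists Cs, (forall u, In u Cs -> const_decl u) /\ valid_from Cs D p.
Proof.
  assert (Hdecls : forall Cs1 Cs2, (forall u, In u Cs1 -> const_decl u) ->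
            (forall u, In u Cs2 -> const_decl u) -> forall u, In u (Cs1 ++ Cs2) -> const_decl u).
  { intros Cs1 Cs2 H1 H2 u Hu; apply in_app_or in Hu as [Hu|Hu]; auto. }
  induction 1 as [D p Hin Hf|D p q Hf Hd [Cs [HCs IH]]
                 |D p q Hd1 [Cs1 [HCs1 IH1]] Hd2 [Cs2 [HCs2 IH2]]
                 |D p x Hq Hx1 Hx2 Hd [Cs [HCs IH]]|D s0 p t Hd [Cs [HCs IH]] Ht].
  - exists []; split; [simpl; tauto|]. apply valid_axiom; auto.
  - exists (Cs ++ const_decls p); split; [apply Hdecls; eauto using const_decls_decl|].
    apply valid_imp_intro; eauto using derived_is_formula.
  - exists (Cs1 ++ Cs2); split; [apply Hdecls; auto|].
    apply (valid_imp_elim _ _ _ p); eauto using derived_is_formula.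
  - exists Cs; split; auto.
    pose proof (derived_is_formula _ _ (P_allI p x Hq Hx1 Hx2 Hd)) as Hall.
    inversion Hall as [| | | | |? ? ? ? Hp]; subst.
    apply valid_all_intro; auto.
  - exists (Cs ++ const_decls t); split; [apply Hdecls; eauto using const_decls_decl|].
    pose proof (derived_is_formula _ _ Hd) as Hall.
    inversion Hall as [| | | | |? ? ? ? Hp]; subst.
    apply (valid_all_elim _ _ s0); auto.
Qed.

(** Instantiating the variables that are not free in the sequent *)

(* A canonical closed inhabitant of A_tau, built from the variables y_b : b:
   y_b itself at base types, H applied to L H at type o (indeed H (L H) holds),
   and constant functions at arrow types. *)
Fixpoint inhabitant (y : B -> var B) (t : ty B) : iterm :=
  match t with
  | To => IApp IL IH
  | Tb b => IFVar (y b)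
  | Tarr _ t' => ILam (inhabitant y t')
  end.

Lemma inhabitant_lc y t : lc (inhabitant y t).
Proof.
  induction t; unfold lc in *; simpl; [repeat split; lia|exact I|].
  eapply lc_at_mono; eauto.
Qed.

Lemma inhabitant_typed y t G : (forall b, In (IApp (IAb b) (IFVar (y b))) G) ->
  I_der G (IApp (Aty t) (inhabitant y t)).
Proof.
  revert G; induction t as [|b|b t IHt]; intros G HG.
  - apply I_Hi, I_LH.
  - apply I_ax, HG.
  - set (c := inhabitant y t).
    assert (Lc : lc c) by apply inhabitant_lc.
    destruct (fresh_var (ifvs G ++ ifv c) (Tb b)) as [x [_ Hx]].
    apply (fun_intro G (IAb b) (Aty t) (ILam c) x); try exact I; try fresh_from Hx.
    + apply lc_Aty.
    + unfold lc; simpl; apply lc_at_of_lc; auto.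
    + rewrite ifv_Aty; auto.
    + eapply I_Eq; [apply IHt; intros b'; right; auto|].
      apply beq_app; [apply beq_refl|]. apply beq_sym.
      eapply beq_trans; [apply beq_beta; [unfold lc; simpl; apply lc_at_of_lc; auto|exact I]|].
      unfold iopen; rewrite iopen_lc by auto; apply beq_refl.
    + apply I_LA.
Qed.

Definition default_subst (FV : list (var B)) (y : B -> var B) : var B -> iterm :=
  fun z => if excluded_middle_informative (In z FV) then IFVar z else inhabitant y (fst z).

Lemma default_subst_closing FV y : closing (default_subst FV y).
Proof.
  intros z; unfold default_subst.
  destruct (excluded_middle_informative (In z FV)); [exact I|apply inhabitant_lc].
Qed.

Lemma default_subst_in FV y z : In z FV -> default_subst FV y z = IFVar z.
Proof.
  unfold default_subst; destruct (excluded_middle_informative (In z FV)); tauto.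
Qed.

Lemma default_subst_inhabits FV y G :
  (forall x, In x FV -> In (IApp (Aty (fst x)) (IFVar x)) G) ->
  (forall b, In (IApp (IAb b) (IFVar (y b))) G) -> inhabits G (default_subst FV y).
Proof.
  intros HFV Hy z G' Hincl; unfold default_subst.
  destruct excluded_middle_informative as [Hz|Hz].
  - exact (I_ax _ _ (Hincl _ (HFV z Hz))).
  - apply inhabitant_typed; intros b; apply Hincl, Hy.
Qed.

(* The finite part of ⌈Δ⌉, Γ(Δ ∪ {φ}) used to derive ⌈φ⌉: the translated
   hypotheses l, the declarations of the free variables of l and φ, the
   constant declarations Cs, and the declarations of the y_b for b in Bl. *)
Definition context (l : list pterm) (phi : pterm) (Cs : list iterm) (Bl : list B)
  (y : B -> var B) : list iterm :=
  map (@tr B Sig) l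
  ++ map (fun x => IApp (Aty (fst x)) (IFVar x)) (pfvs l ++ pfv phi)
  ++ Cs ++ map (fun b => IApp (IAb b) (IFVar (y b))) Bl.

Lemma context_in_Gamma (Delta : pterm -> Prop) l phi Cs Bl y :
  (forall q, In q l -> Delta q) -> (forall u, In u Cs -> const_decl u) ->
  forall u, In u (context l phi Cs Bl y) ->
  trSet Delta u \/ GammaSet (fun q => Delta q \/ q = phi) y u.
Proof.
  intros Hl HCs u Hu; unfold context in Hu; rewrite !in_app_iff in Hu.
  destruct Hu as [Hu|[Hu|[Hu|Hu]]].
  - apply in_map_iff in Hu as [q [<- Hq]]. left; exists q; auto.
  - apply in_map_iff in Hu as [x [<- Hx]]. right; left; exists x; split; auto.
    apply in_app_iff in Hx as [Hx|Hx].
    + apply in_flat_map in Hx as [q [Hq Hxq]]. exists q; auto.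
    + exists phi; auto.
  - right; right; left; apply HCs, Hu.
  - apply in_map_iff in Hu as [b [<- _]]. right; right; right; right; exists b; auto.
Qed.

Lemma context_derives l phi Cs Bl y : (forall b, In b Bl) ->
  valid_from Cs l phi -> I_der (context l phi Cs Bl y) (tr phi).
Proof.
  intros HBl Hvalid.
  set (FV := pfvs l ++ pfv phi).
  assert (Hid : forall q, incl (pfv q) FV -> isub (default_subst FV y) (tr q) = tr q).
  { intros q Hq; apply isub_id; intros x Hx.
    apply default_subst_in, Hq; rewrite <- ifv_tr; auto. }
  rewrite <- Hid by (intros x Hx; apply in_app_iff; auto).
  apply Hvalid; unfold context; fold FV.
  - apply default_subst_closing.
  - apply default_subst_inhabits; intros; rewrite !in_app_iff.
    + right; left; apply (in_map (fun x => IApp (Aty (fst x)) (IFVar x))); auto.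
    + right; right; right; apply (in_map (fun b => IApp (IAb b) (IFVar (y b)))); auto.
  - intros q Hq; exists (tr q); split.
    + apply in_app_iff; left; apply in_map; auto.
    + rewrite Hid; [apply beq_refl|].
      intros x Hx; apply in_app_iff; left; apply in_flat_map; eauto.
  - intros u Hu; rewrite !in_app_iff; auto.
Qed.

End Soundness.

Theorem mainTheorem8 (B : Type) (Sig : ty B -> Type)
  (HBfin : exists l : list B, forall b : B, In b l)
  (Delta : pterm Sig -> Prop) (phi : pterm Sig) (y : B -> var B) :
  (forall q, Delta q -> is_formula q) ->
  is_formula phi ->
  good_choice (fun q => Delta q \/ q = phi) y ->
  P_derives Delta phi ->
  I_derives
    (fun t => trSet Delta t \/ GammaSet (fun q => Delta q \/ q = phi) y t)
    (tr phi).
Proof.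
  intros _ _ _ [l [Hl Hder]].
  destruct HBfin as [Bl HBl].
  destruct (soundness _ _ _ _ Hder) as [Cs [HCs Hvalid]].
  exists (context B Sig l phi Cs Bl y); split.
  - apply context_in_Gamma; assumption.
  - apply context_derives; assumption.
Qed.
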